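(* Let $N\ge3$, $\frac{N}{N-1}<p<2$, $\xi=(p-1)(N-1)$, $\beta=\frac{p-1}{\xi-1}$, $\sigma=\frac{2-p}{p-1}$. There is a constant $C>0$ such that for every $t>0$ and every function $b$ on $(0,1]$ with $\sup_{0<r\le1}r^{\sigma+2}|b(r)|\le 1$, there is a solution $a_t$ of \[ -a_t''(r)-\frac{(N-1)a_t'(r)}{r}+\frac{p\,a_t'(r)}{\beta r+tr^{\xi}}=b(r),\quad 0<r<1,\qquad a_t(1)=0, \] satisfying $\sup_{0<r\le1}\{r^{\sigma}|a_t(r)|+r^{\sigma+1}|a_t'(r)|\}\le C$. *)

From Stdlib Require Import Reals Lra.
Open Scope R_scope.

Definition left_continuous_at (f : R -> R) (x : R) : Prop :=
  forall eps, 0 < eps -> exists delta, 0 < delta /\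
    forall r, x - delta < r < x -> Rabs (f r - f x) < eps.

Definition continuous_on_0_1 (f : R -> R) : Prop :=
  forall x, 0 < x <= 1 -> forall eps, 0 < eps -> exists delta, 0 < delta /\
    forall r, 0 < r <= 1 -> Rabs (r - x) < delta -> Rabs (f r - f x) < eps.

Definition xi_of (N : nat) (p : R) : R := (p - 1) * (INR N - 1).
Definition beta_of (N : nat) (p : R) : R := (p - 1) / (xi_of N p - 1).
Definition sigma_of (p : R) : R := (2 - p) / (p - 1).

(* a (with derivative da) is a classical solution of
   -a'' - (N-1) a'/r + p a'/(beta r + t r^xi) = b  on (0,1),  a(1) = 0,
   where a and a' are left-continuous at 1 (so a'(1) = da 1 is the
   one-sided limit and the boundary condition is meaningful). *)
Definition is_solution (N : nat) (p t : R) (b a da : R -> R) : Prop :=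
  (forall r, 0 < r < 1 ->
     derivable_pt_lim a r (da r) /\
     exists d2, derivable_pt_lim da r d2 /\
       - d2 - (INR N - 1) * da r / r
         + p * da r / (beta_of N p * r + t * Rpower r (xi_of N p)) = b r)
  /\ a 1 = 0
  /\ left_continuous_at a 1
  /\ left_continuous_at da 1.

From Coquelicot Require Import Coquelicot.
From Stdlib Require Import Reals Lra.
Open Scope R_scope.

(* With u = a', the equation is the linear first-order equation
   u' = ode_coef u - b, and ode_coef is the derivative of
     L(r) = -(N-1) ln r - (sigma+2) ln (beta r^(1-xi) + t),
   because (sigma+2) beta (xi-1) = p.  Take u(r) = int_r^rho b(s) e^(L(r)-L(s)) ds
   and a(r) = int_1^r u, where rho = min(1, (beta/t)^(1/(xi-1))) is the radius at
   which beta r^(1-xi) = t.  Below rho the term beta r^(1-xi) dominates t, above rho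
   it is dominated by t; either way e^(L(r)-L(s)) is a pure power of s/r up to a
   factor 2^(sigma+2).  With |b(s)| <= s^(-sigma-2) and (sigma+1) xi = N-1, the
   integrand is at most 2^(sigma+2) r^(xi-sigma-2) s^(-xi) below rho and
   2^(sigma+2) r^(1-N) s^(N-3-sigma) above it.  Since xi > 1 and sigma < N-2,
   integrating from r towards rho gives |u(r)| <= C r^(-sigma-1) with C independent
   of rho, hence of t; one more integration gives |a(r)| <= C r^(-sigma) / sigma. *)

Lemma exp_le_compat x y : x <= y -> exp x <= exp y.
Proof. intros [Hlt | ->]; [left; apply exp_increasing | right]; auto. Qed.

Lemma Rabs_le_Rpower_opp (s k y : R) :
  Rpower s k * Rabs y <= 1 -> Rabs y <= Rpower s (- k).
Proof.
  intros H. rewrite Rpower_Ropp.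
  assert (Hpos : 0 < Rpower s k) by apply exp_pos.
  apply (Rmult_le_reg_l (Rpower s k)); [exact Hpos|].
  rewrite Rinv_r; lra.
Qed.

Lemma abs_RInt_le_Rpower (f : R -> R) (a b c al : R) :
  0 < a <= b -> al <> -1 -> ex_RInt f a b ->
  (forall s, a <= s <= b -> Rabs (f s) <= c * Rpower s al) ->
  Rabs (RInt f a b) <= c * (Rpower b (al + 1) - Rpower a (al + 1)) / (al + 1).
Proof.
  intros Hab Hal Hf Hbound.
  set (F := fun s => c * Rpower s (al + 1) / (al + 1)).
  assert (HF : is_RInt (fun s => c * Rpower s al) a b (F b - F a)).
  { apply (is_RInt_derive F); intros x Hx; rewrite Rmin_left, Rmax_right in Hx by lra.
    - unfold F, Rpower. auto_derive; [lra|].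
      replace ((al + 1) * ln x) with (al * ln x + ln x) by ring.
      rewrite exp_plus, exp_ln by lra.
      field. split; lra.
    - apply (ex_derive_continuous (V := R_NormedModule)). unfold Rpower.
      auto_derive. lra. }
  replace (c * _ / _) with (F b - F a) by (unfold F; field; lra).
  rewrite <- (is_RInt_unique _ _ _ _ HF).
  eapply Rle_trans; [apply abs_RInt_le; [lra | exact Hf]|].
  apply RInt_le; [lra | apply (ex_RInt_norm f a b Hf) | eexists; exact HF |].
  intros s Hs. apply Hbound. lra.
Qed.

Lemma abs_RInt_le_Rpower_lower (f : R -> R) (a b c k : R) :
  0 <= c -> 0 < k -> 0 < a <= b -> ex_RInt f a b ->
  (forall s, a <= s <= b -> Rabs (f s) <= c * Rpower s (- (k + 1))) ->
  Rabs (RInt f a b) <= c / k * Rpower a (- k).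
Proof.
  intros Hc Hk Hab Hf Hbound.
  eapply Rle_trans; [apply (abs_RInt_le_Rpower f a b c); auto; lra|].
  replace (- (k + 1) + 1) with (- k) by ring.
  assert (0 <= c / k * Rpower b (- k)) by
    (apply Rmult_le_pos; [apply Rdiv_le_0_compat|left; apply exp_pos]; lra).
  replace (c * (Rpower b (- k) - Rpower a (- k)) / - k)
    with (c / k * Rpower a (- k) - c / k * Rpower b (- k)) by (field; lra).
  lra.
Qed.

Lemma abs_RInt_le_Rpower_upper (f : R -> R) (a b c k : R) :
  0 <= c -> 0 < k -> 0 < a <= b -> ex_RInt f a b ->
  (forall s, a <= s <= b -> Rabs (f s) <= c * Rpower s (k - 1)) ->
  Rabs (RInt f a b) <= c / k * Rpower b k.
Proof.
  intros Hc Hk Hab Hf Hbound.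
  eapply Rle_trans; [apply (abs_RInt_le_Rpower f a b c); auto; lra|].
  replace (k - 1 + 1) with k by ring.
  assert (0 <= c / k * Rpower a k) by
    (apply Rmult_le_pos; [apply Rdiv_le_0_compat|left; apply exp_pos]; lra).
  replace (c * (Rpower b k - Rpower a k) / k)
    with (c / k * Rpower b k - c / k * Rpower a k) by (field; lra).
  lra.
Qed.

Lemma continuous_left_continuous_at (f : R -> R) (x : R) :
  continuous f x -> left_continuous_at f x.
Proof.
  intros Hf eps Heps.
  destruct (proj2 (continuity_pt_filterlim f x) Hf eps Heps) as (d & Hd & Hnear).
  exists d. split; [exact Hd|]. intros r Hr. apply Hnear. split.
  - split; [exact I | lra].
  - simpl. unfold R_dist. rewrite Rabs_left; lra.
Qed.

Lemma continuous_Rmin_1 (b : R -> R) (s : R) :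
  continuous_on_0_1 b -> 0 < s -> continuous (fun y => b (Rmin y 1)) s.
Proof.
  intros Hb Hs. apply continuity_pt_filterlim. intros eps Heps.
  assert (Hm : 0 < Rmin s 1 <= 1) by (split; [apply Rmin_glb_lt | apply Rmin_r]; lra).
  destruct (Hb (Rmin s 1) Hm eps Heps) as (d & Hd & Hnear).
  exists (Rmin d s). split; [apply Rmin_glb_lt; lra|].
  intros y [_ Hy]. simpl in *. unfold R_dist in *.
  assert (Hyd : Rabs (y - s) < d) by (pose proof (Rmin_l d s); lra).
  assert (Hys : Rabs (y - s) < s) by (pose proof (Rmin_r d s); lra).
  apply Rabs_lt_between' in Hys.
  apply Hnear.
  - split; [apply Rmin_glb_lt; lra | apply Rmin_r].
  - eapply Rle_lt_trans; [|exact Hyd].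
    unfold Rmin. destruct (Rle_dec y 1), (Rle_dec s 1);
      apply Rabs_le_between'; split_Rabs; lra.
Qed.

Lemma locally_of_pos (P : R -> Prop) (r : R) :
  0 < r -> (forall y, 0 < y -> P y) -> locally r P.
Proof.
  intros Hr HP. exists (mkposreal (r / 2) ltac:(lra)). intros y Hy.
  change (Rabs (y - r) < r / 2) in Hy. apply Rabs_lt_between' in Hy.
  apply HP. lra.
Qed.

Lemma ex_RInt_pos (f : R -> R) (x y : R) :
  (forall z, 0 < z -> continuous f z) -> 0 < x -> 0 < y -> ex_RInt f x y.
Proof.
  intros Hf Hx Hy. apply (ex_RInt_continuous (V := R_CompleteNormedModule)).
  intros z Hz. apply Hf.
  assert (0 < Rmin x y) by (apply Rmin_glb_lt; auto). lra.
Qed.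

Lemma is_derive_RInt_pos (f : R -> R) (x r : R) :
  (forall z, 0 < z -> continuous f z) -> 0 < x -> 0 < r ->
  is_derive (fun y => RInt f x y) r (f r).
Proof.
  intros Hf Hx Hr. apply (is_derive_RInt (V := R_CompleteNormedModule) _ _ x).
  - apply locally_of_pos; [exact Hr|]. intros y Hy.
    apply (RInt_correct (V := R_CompleteNormedModule)). apply ex_RInt_pos; auto.
  - apply Hf. exact Hr.
Qed.

Section LinearODE.

Variables (L dL g : R -> R) (c : R).
Hypotheses (HL : forall r, 0 < r -> is_derive L r (dL r))
           (Hg : forall r, 0 < r -> continuous g r)
           (Hc : 0 < c).

Definition linear_ode_sol (r : R) : R :=
  exp (L r) * RInt (fun s => g s * exp (- L s)) r c.

Let continuous_integrand s : 0 < s -> continuous (fun s => g s * exp (- L s)) s.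
Proof.
  intros Hs. apply (continuous_mult (K := R_AbsRing)); [apply Hg; exact Hs|].
  apply (continuous_comp L (fun y => exp (- y))).
  - apply (ex_derive_continuous (V := R_NormedModule)). eexists. apply HL. exact Hs.
  - apply (ex_derive_continuous (V := R_NormedModule)). auto_derive. exact I.
Qed.

Lemma is_derive_linear_ode_sol r :
  0 < r -> is_derive linear_ode_sol r (dL r * linear_ode_sol r - g r).
Proof.
  intros Hr. unfold linear_ode_sol.
  set (h := fun s => g s * exp (- L s)).
  assert (Hh : is_derive (fun y => RInt h y c) r (- h r)).
  { apply (is_derive_RInt' (V := R_CompleteNormedModule) _ _ r c).
    - apply locally_of_pos; [exact Hr|]. intros y Hy.
      apply (RInt_correct (V := R_CompleteNormedModule)).
      apply ex_RInt_pos; auto.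
    - apply continuous_integrand. exact Hr. }
  assert (HE : is_derive (fun y => exp (L y)) r (dL r * exp (L r))).
  { apply (is_derive_comp exp L); [apply is_derive_exp | apply HL; exact Hr]. }
  replace (dL r * (exp (L r) * RInt h r c) - g r)
    with (plus (mult (dL r * exp (L r)) (RInt h r c)) (mult (exp (L r)) (- h r))).
  - apply (is_derive_mult (fun y => exp (L y)) (fun y => RInt h y c)); auto.
    intros; apply Rmult_comm.
  - change (h r) with (g r * exp (- L r)).
    change (dL r * exp (L r) * RInt h r c + exp (L r) * - (g r * exp (- L r))
            = dL r * (exp (L r) * RInt h r c) - g r).
    assert (E : exp (L r) * exp (- L r) = 1)
      by (rewrite <- exp_plus, Rplus_opp_r; apply exp_0).
    transitivity (dL r * (exp (L r) * RInt h r c) - g r * (exp (L r) * exp (- L r)));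
      [ring | rewrite E; ring].
Qed.

Lemma continuous_linear_ode_sol r : 0 < r -> continuous linear_ode_sol r.
Proof.
  intros Hr. apply (ex_derive_continuous (V := R_NormedModule)).
  eexists. apply is_derive_linear_ode_sol. exact Hr.
Qed.

Lemma linear_ode_sol_RInt r :
  0 < r -> linear_ode_sol r = RInt (fun s => g s * exp (L r - L s)) r c.
Proof.
  intros Hr. unfold linear_ode_sol.
  rewrite <- (RInt_scal (V := R_CompleteNormedModule)) by (apply ex_RInt_pos; auto).
  apply RInt_ext. intros s _. unfold Rminus. rewrite exp_plus.
  change scal with Rmult. simpl. ring.
Qed.

Lemma ex_RInt_linear_ode_integrand r x y :
  0 < x -> 0 < y -> ex_RInt (fun s => g s * exp (L r - L s)) x y.
Proof.
  intros Hx Hy.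
  apply (ex_RInt_ext (fun s => scal (exp (L r)) (g s * exp (- L s)))).
  - intros s _. unfold Rminus. rewrite exp_plus. change scal with Rmult. simpl. ring.
  - apply (ex_RInt_scal (V := R_CompleteNormedModule)). apply ex_RInt_pos; auto.
Qed.

End LinearODE.

Lemma ln_add_diff_le_small_shift (x y t : R) :
  0 < y -> 0 < t -> t <= x -> ln (x + t) - ln (y + t) <= ln 2 + (ln x - ln y).
Proof.
  intros Hy Ht Htx.
  assert (Hup : ln (x + t) <= ln (2 * x)) by (apply ln_le; lra).
  assert (Hlow : ln y <= ln (y + t)) by (apply ln_le; lra).
  rewrite ln_mult in Hup by lra. lra.
Qed.

Lemma ln_add_diff_le_large_shift (x y t : R) :
  0 < x -> 0 < y -> x <= t -> ln (x + t) - ln (y + t) <= ln 2.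
Proof.
  intros Hx Hy Hxt.
  assert (Hup : ln (x + t) <= ln (2 * t)) by (apply ln_le; lra).
  assert (Hlow : ln t <= ln (y + t)) by (apply ln_le; lra).
  rewrite ln_mult in Hup by lra. lra.
Qed.

Lemma Rpower_mul_opp (x y : R) : Rpower x y * Rpower x (- y) = 1.
Proof. rewrite <- Rpower_plus, Rplus_opp_r. unfold Rpower. rewrite Rmult_0_l. apply exp_0. Qed.

Lemma Rpower_mul_le (r k c y : R) : y <= c * Rpower r (- k) -> Rpower r k * y <= c.
Proof.
  intros H. replace c with (Rpower r k * (c * Rpower r (- k))).
  - apply Rmult_le_compat_l; [left; apply exp_pos | exact H].
  - transitivity (c * (Rpower r k * Rpower r (- k))); [ring | rewrite Rpower_mul_opp; ring].
Qed.

Section Model.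

Variables (N : nat) (p : R).
Hypotheses (HN : 1 < INR N) (Hp_low : INR N / (INR N - 1) < p) (Hp_high : p < 2).

Local Notation xi := (xi_of N p).
Local Notation beta := (beta_of N p).
Local Notation sigma := (sigma_of p).

Let N_lt_p_mul : INR N < p * (INR N - 1).
Proof.
  apply (Rmult_lt_compat_r (INR N - 1)) in Hp_low; [|lra].
  unfold Rdiv in Hp_low. rewrite Rmult_assoc, Rinv_l, Rmult_1_r in Hp_low; lra.
Qed.

Lemma p_gt_1 : 1 < p.
Proof. nra. Qed.

Lemma xi_gt_1 : 1 < xi.
Proof. unfold xi_of. lra. Qed.

Lemma beta_gt_0 : 0 < beta.
Proof. pose proof p_gt_1; pose proof xi_gt_1. apply Rdiv_lt_0_compat; lra. Qed.

Lemma sigma_gt_0 : 0 < sigma.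
Proof. pose proof p_gt_1. apply Rdiv_lt_0_compat; lra. Qed.

Lemma sigma_lt_N_2 : sigma < INR N - 2.
Proof.
  pose proof p_gt_1. unfold sigma_of.
  apply (Rmult_lt_reg_r (p - 1)); [lra|].
  unfold Rdiv. rewrite Rmult_assoc, Rinv_l; lra.
Qed.

Lemma sigma_xi : (sigma + 1) * xi = INR N - 1.
Proof. pose proof p_gt_1. unfold sigma_of, xi_of. field. lra. Qed.

Lemma sigma_beta_xi : (sigma + 2) * beta * (xi - 1) = p.
Proof.
  pose proof p_gt_1; pose proof xi_gt_1.
  unfold sigma_of, beta_of. field. lra.
Qed.

Definition bound_const : R :=
  Rpower 2 (sigma + 2) * (/ (xi - 1) + / (INR N - 2 - sigma)).

Lemma bound_const_gt_0 : 0 < bound_const.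
Proof.
  pose proof xi_gt_1; pose proof sigma_lt_N_2.
  apply Rmult_lt_0_compat; [apply exp_pos|].
  apply Rplus_lt_0_compat; apply Rinv_0_lt_compat; lra.
Qed.

Section Weight.

Variable t : R.
Hypothesis Ht : 0 < t.

Definition log_weight (r : R) : R :=
  - (INR N - 1) * ln r - (sigma + 2) * ln (beta * Rpower r (1 - xi) + t).

Definition ode_coef (r : R) : R := - (INR N - 1) / r + p / (beta * r + t * Rpower r xi).

Lemma is_derive_log_weight r : 0 < r -> is_derive log_weight r (ode_coef r).
Proof.
  intros Hr. unfold ode_coef. pose proof beta_gt_0 as Hbeta. pose proof xi_gt_1.
  assert (HE : 0 < exp ((1 - xi) * ln r)) by apply exp_pos.
  assert (HF : 0 < exp (xi * ln r)) by apply exp_pos.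
  assert (EF : exp ((1 - xi) * ln r) * exp (xi * ln r) = r).
  { rewrite <- exp_plus. replace ((1 - xi) * ln r + xi * ln r) with (ln r) by ring.
    apply exp_ln. exact Hr. }
  unfold log_weight, Rpower. auto_derive.
  - repeat split; nra.
  - pose proof sigma_beta_xi as Hp.
    set (E := exp ((1 - xi) * ln r)) in *. set (F := exp (xi * ln r)) in *.
    set (sg := sigma) in *. set (B := beta) in *. set (X := xi) in *.
    rewrite <- Hp, <- EF. field. repeat split; nra.
Qed.

Let ln_beta_Rpower u : 0 < u -> ln (beta * Rpower u (1 - xi)) = ln beta + (1 - xi) * ln u.
Proof.
  intros Hu. pose proof beta_gt_0.
  rewrite ln_mult, ln_Rpower; [reflexivity | lra | apply exp_pos].
Qed.

Let beta_Rpower_pos u : 0 < beta * Rpower u (1 - xi).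
Proof. pose proof beta_gt_0. apply Rmult_lt_0_compat; [lra | apply exp_pos]. Qed.

Lemma log_weight_diff_below r s :
  0 < r -> 0 < s -> t <= beta * Rpower s (1 - xi) ->
  log_weight r - log_weight s <= (sigma + 2) * ln 2 + (sigma + 2 - xi) * (ln s - ln r).
Proof.
  intros Hr Hs Hts. pose proof sigma_gt_0.
  assert (D := ln_add_diff_le_small_shift _ _ t (beta_Rpower_pos r) Ht Hts).
  rewrite !ln_beta_Rpower in D by assumption.
  apply (Rmult_le_compat_l (sigma + 2)) in D; [|lra].
  unfold log_weight. rewrite <- sigma_xi. lra.
Qed.

Lemma log_weight_diff_above r s :
  0 < r -> 0 < s -> beta * Rpower s (1 - xi) <= t ->
  log_weight r - log_weight s <= (sigma + 2) * ln 2 + (INR N - 1) * (ln s - ln r).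
Proof.
  intros Hr Hs Hst. pose proof sigma_gt_0.
  assert (D := ln_add_diff_le_large_shift _ _ t (beta_Rpower_pos s) (beta_Rpower_pos r) Hst).
  apply (Rmult_le_compat_l (sigma + 2)) in D; [|lra].
  unfold log_weight. lra.
Qed.

Definition threshold : R := Rmin 1 (Rpower (beta / t) (/ (xi - 1))).

Let beta_Rpower_exp u : 0 < u -> beta * Rpower u (1 - xi) = exp (ln beta + (1 - xi) * ln u).
Proof. intros Hu. rewrite <- ln_beta_Rpower, exp_ln; [reflexivity | apply beta_Rpower_pos | exact Hu]. Qed.

Let ln_Rpower_threshold : (xi - 1) * ln (Rpower (beta / t) (/ (xi - 1))) = ln beta - ln t.
Proof.
  pose proof xi_gt_1. pose proof beta_gt_0.
  rewrite ln_Rpower, ln_div by lra. field. lra.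
Qed.

Lemma below_threshold s :
  0 < s -> s <= threshold -> t <= beta * Rpower s (1 - xi).
Proof.
  intros Hs Hsth. pose proof xi_gt_1.
  assert (Hl : ln s <= ln (Rpower (beta / t) (/ (xi - 1))))
    by (apply ln_le; [exact Hs | exact (Rle_trans _ _ _ Hsth (Rmin_r _ _))]).
  rewrite beta_Rpower_exp, <- (exp_ln t) at 1 by assumption.
  apply exp_le_compat. nra.
Qed.

Lemma above_threshold s :
  0 < s -> threshold < 1 -> threshold <= s -> beta * Rpower s (1 - xi) <= t.
Proof.
  intros Hs Hth1 Hsth.
  assert (Hth : threshold = Rpower (beta / t) (/ (xi - 1))).
  { unfold threshold, Rmin in *. destruct (Rle_dec 1 (Rpower (beta / t) (/ (xi - 1)))); lra. }
  pose proof xi_gt_1.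
  assert (Hl : ln (Rpower (beta / t) (/ (xi - 1))) <= ln s)
    by (apply ln_le; [apply exp_pos | rewrite <- Hth; exact Hsth]).
  rewrite beta_Rpower_exp, <- (exp_ln t) at 1 by assumption.
  apply exp_le_compat. nra.
Qed.

Lemma threshold_pos : 0 < threshold.
Proof. apply Rmin_glb_lt; [lra | apply exp_pos]. Qed.

Lemma threshold_le_1 : threshold <= 1.
Proof. apply Rmin_l. Qed.

Section Forcing.

Variable b : R -> R.
Hypotheses (Hb_cont : continuous_on_0_1 b)
           (Hb_bound : forall r, 0 < r <= 1 -> Rpower r (sigma + 2) * Rabs (b r) <= 1).

(* [b] is extended by [b 1] to the right of 1, so that the forcing term is
   continuous on the whole of (0, +oo). *)
Definition sol_deriv : R -> R := linear_ode_sol log_weight (fun s => b (Rmin s 1)) threshold.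

Definition sol (r : R) : R := RInt sol_deriv 1 r.

Let continuous_forcing r : 0 < r -> continuous (fun s => b (Rmin s 1)) r.
Proof. apply continuous_Rmin_1. exact Hb_cont. Qed.

Let continuous_sol_deriv r : 0 < r -> continuous sol_deriv r.
Proof.
  apply (continuous_linear_ode_sol _ _ _ _ is_derive_log_weight continuous_forcing threshold_pos).
Qed.

Let sol_deriv_RInt r :
  0 < r ->
  sol_deriv r = RInt (fun s => b (Rmin s 1) * exp (log_weight r - log_weight s)) r threshold.
Proof.
  apply (linear_ode_sol_RInt _ _ _ _ is_derive_log_weight continuous_forcing threshold_pos).
Qed.

Let ex_RInt_forcing_weight r x y :
  0 < x -> 0 < y ->
  ex_RInt (fun s => b (Rmin s 1) * exp (log_weight r - log_weight s)) x y.
Proof.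
  apply (ex_RInt_linear_ode_integrand _ _ _ is_derive_log_weight continuous_forcing).
Qed.

Lemma integrand_bound_below r s :
  0 < r -> 0 < s <= threshold ->
  Rabs (b (Rmin s 1) * exp (log_weight r - log_weight s))
  <= Rpower 2 (sigma + 2) * Rpower r (xi - sigma - 2) * Rpower s (- xi).
Proof.
  intros Hr [Hs Hsth]. pose proof threshold_le_1.
  assert (Hs1 : 0 < s <= 1) by lra.
  rewrite Rmin_left by lra.
  assert (Hbs := Rabs_le_Rpower_opp _ _ _ (Hb_bound s Hs1)).
  assert (HL := log_weight_diff_below r s Hr Hs (below_threshold s Hs Hsth)).
  rewrite Rabs_mult, (Rabs_pos_eq (exp _)) by (left; apply exp_pos).
  eapply Rle_trans; [apply Rmult_le_compat_r; [left; apply exp_pos | exact Hbs]|].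
  unfold Rpower. rewrite <- !exp_plus. apply exp_le_compat. lra.
Qed.

Lemma integrand_bound_above r s :
  0 < r -> threshold < 1 -> threshold <= s <= 1 ->
  Rabs (b (Rmin s 1) * exp (log_weight r - log_weight s))
  <= Rpower 2 (sigma + 2) * Rpower r (- (INR N - 1)) * Rpower s (INR N - 3 - sigma).
Proof.
  intros Hr Hth1 [Hsth Hs1]. pose proof threshold_pos.
  assert (Hs : 0 < s) by lra.
  rewrite Rmin_left by lra.
  assert (Hbs := Rabs_le_Rpower_opp _ _ _ (Hb_bound s (conj Hs Hs1))).
  assert (HL := log_weight_diff_above r s Hr Hs (above_threshold s Hs Hth1 Hsth)).
  rewrite Rabs_mult, (Rabs_pos_eq (exp _)) by (left; apply exp_pos).
  eapply Rle_trans; [apply Rmult_le_compat_r; [left; apply exp_pos | exact Hbs]|].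
  unfold Rpower. rewrite <- !exp_plus. apply exp_le_compat. lra.
Qed.

Lemma sol_deriv_bound_below r :
  0 < r <= threshold ->
  Rabs (sol_deriv r) <= Rpower 2 (sigma + 2) / (xi - 1) * Rpower r (- (sigma + 1)).
Proof.
  intros [Hr Hrth]. pose proof xi_gt_1. pose proof threshold_pos.
  set (c := Rpower 2 (sigma + 2) * Rpower r (xi - sigma - 2)).
  rewrite sol_deriv_RInt by exact Hr.
  eapply Rle_trans.
  { apply (abs_RInt_le_Rpower_lower _ r threshold c (xi - 1)).
    - left. apply Rmult_lt_0_compat; apply exp_pos.
    - lra.
    - lra.
    - apply ex_RInt_forcing_weight; lra.
    - intros s Hs. replace (- (xi - 1 + 1)) with (- xi) by ring.
      apply integrand_bound_below; lra. }
  right. unfold c, Rdiv.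
  replace (Rpower r (- (sigma + 1)))
    with (Rpower r (xi - sigma - 2) * Rpower r (- (xi - 1)))
    by (rewrite <- Rpower_plus; f_equal; ring).
  ring.
Qed.

Lemma sol_deriv_bound_above r :
  threshold < r <= 1 ->
  Rabs (sol_deriv r) <= Rpower 2 (sigma + 2) / (INR N - 2 - sigma) * Rpower r (- (sigma + 1)).
Proof.
  intros [Hrth Hr1]. pose proof sigma_lt_N_2. pose proof threshold_pos.
  set (c := Rpower 2 (sigma + 2) * Rpower r (- (INR N - 1))).
  rewrite sol_deriv_RInt by lra.
  rewrite <- (opp_RInt_swap (V := R_CompleteNormedModule)) by (apply ex_RInt_forcing_weight; lra).
  change (opp ?x) with (- x). rewrite Rabs_Ropp.
  eapply Rle_trans.
  { apply (abs_RInt_le_Rpower_upper _ threshold r c (INR N - 2 - sigma)).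
    - left. apply Rmult_lt_0_compat; apply exp_pos.
    - lra.
    - lra.
    - apply ex_RInt_forcing_weight; lra.
    - intros s Hs. replace (INR N - 2 - sigma - 1) with (INR N - 3 - sigma) by ring.
      apply integrand_bound_above; lra. }
  right. unfold c, Rdiv.
  replace (Rpower r (- (sigma + 1)))
    with (Rpower r (- (INR N - 1)) * Rpower r (INR N - 2 - sigma))
    by (rewrite <- Rpower_plus; f_equal; ring).
  ring.
Qed.

Lemma sol_deriv_bound r :
  0 < r <= 1 -> Rabs (sol_deriv r) <= bound_const * Rpower r (- (sigma + 1)).
Proof.
  intros Hr. pose proof xi_gt_1. pose proof sigma_lt_N_2.
  assert (H2 : 0 < Rpower 2 (sigma + 2)) by apply exp_pos.
  assert (Hrp : 0 < Rpower r (- (sigma + 1))) by apply exp_pos.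
  assert (Hinv1 : 0 < / (xi - 1)) by (apply Rinv_0_lt_compat; lra).
  assert (Hinv2 : 0 < / (INR N - 2 - sigma)) by (apply Rinv_0_lt_compat; lra).
  unfold bound_const.
  destruct (Rle_lt_dec r threshold) as [Hle | Hlt].
  - eapply Rle_trans; [apply sol_deriv_bound_below; lra|].
    unfold Rdiv. apply Rmult_le_compat_r; [lra|]. apply Rmult_le_compat_l; lra.
  - eapply Rle_trans; [apply sol_deriv_bound_above; lra|].
    unfold Rdiv. apply Rmult_le_compat_r; [lra|]. apply Rmult_le_compat_l; lra.
Qed.

Lemma sol_bound r : 0 < r <= 1 -> Rabs (sol r) <= bound_const / sigma * Rpower r (- sigma).
Proof.
  intros Hr. pose proof sigma_gt_0. pose proof bound_const_gt_0.
  unfold sol.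
  rewrite <- (opp_RInt_swap (V := R_CompleteNormedModule))
    by (apply ex_RInt_pos; [exact continuous_sol_deriv | lra | lra]).
  change (opp ?x) with (- x). rewrite Rabs_Ropp.
  apply abs_RInt_le_Rpower_lower; try lra.
  - apply ex_RInt_pos; [exact continuous_sol_deriv | lra | lra].
  - intros s Hs. apply sol_deriv_bound. lra.
Qed.

Lemma sol_weighted_bound r :
  0 < r <= 1 ->
  Rpower r sigma * Rabs (sol r) + Rpower r (sigma + 1) * Rabs (sol_deriv r)
  <= bound_const / sigma + bound_const.
Proof.
  intros Hr. apply Rplus_le_compat; apply Rpower_mul_le.
  - apply sol_bound. exact Hr.
  - apply sol_deriv_bound. exact Hr.
Qed.

Lemma sol_is_solution : is_solution N p t b sol sol_deriv.
Proof.
  assert (Hsol : forall r, 0 < r -> is_derive sol r (sol_deriv r)).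
  { intros r Hr. apply is_derive_RInt_pos; [exact continuous_sol_deriv | lra | exact Hr]. }
  split; [|split; [|split]].
  - intros r Hr. split; [apply is_derive_Reals, Hsol; lra|].
    exists (ode_coef r * sol_deriv r - b (Rmin r 1)). split.
    + apply is_derive_Reals.
      apply (is_derive_linear_ode_sol _ _ _ _ is_derive_log_weight continuous_forcing threshold_pos).
      lra.
    + unfold ode_coef. rewrite Rmin_left by lra. unfold Rdiv. ring.
  - apply (RInt_point (V := R_CompleteNormedModule)).
  - apply continuous_left_continuous_at, (ex_derive_continuous (V := R_NormedModule)).
    eexists. apply Hsol. lra.
  - apply continuous_left_continuous_at, continuous_sol_deriv. lra.
Qed.

End Forcing.
End Weight.
End Model.

Theorem lemma2p7 (N : nat) (p : R) :
  (3 <= N)%nat ->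
  INR N / (INR N - 1) < p -> p < 2 ->
  exists C : R, 0 < C /\
    forall (t : R) (b : R -> R),
      0 < t ->
      continuous_on_0_1 b ->
      (forall r, 0 < r <= 1 -> Rpower r (sigma_of p + 2) * Rabs (b r) <= 1) ->
      exists a da : R -> R,
        is_solution N p t b a da /\
        (forall r, 0 < r <= 1 ->
           Rpower r (sigma_of p) * Rabs (a r)
           + Rpower r (sigma_of p + 1) * Rabs (da r) <= C).
Proof.
  intros HN3 Hp_low Hp_high.
  assert (HN : 1 < INR N) by (apply le_INR in HN3; simpl in HN3; lra).
  pose proof (sigma_gt_0 N p HN Hp_low Hp_high) as Hsigma.
  pose proof (bound_const_gt_0 N p HN Hp_low Hp_high) as HK.
  exists (bound_const N p / sigma_of p + bound_const N p). split.
  - assert (0 < bound_const N p / sigma_of p) by (apply Rdiv_lt_0_compat; lra). lra.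
  - intros t b Ht Hb_cont Hb_bound.
    exists (sol N p t b), (sol_deriv N p t b). split.
    + apply sol_is_solution; assumption.
    + intros r Hr. apply sol_weighted_bound; assumption.
Qed.
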